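(* Let $\mathcal{X},\mathcal{Y}$ be finite alphabets and $P_{XY}$ a joint PMF on $\mathcal{X}\times\mathcal{Y}$ with $P_X$ fully supported. Let $(X^N,Y^N)\sim P_{XY}^{\otimes N}$, $M\in\mathbb{N}$, $\beta>0$, $L=\beta\log M$, $N=ML$ (integer constraints ignored), with fragments $\boldsymbol{X}(i)=X_{(i-1)L+1}^{iL}$. Let $\hat X^N\in\arg\max_{\tilde X^N\in\mathcal{A}_L(X^N)}\mathbb{P}[Y^N\mid\tilde X^N]$ be a maximum-likelihood reconstruction, $\mathcal{A}_L(X^N)=\{(\boldsymbol{X}(\pi(1)),\ldots,\boldsymbol{X}(\pi(M))):\pi\in S_M\}$, with fragments $\hat{\boldsymbol{X}}(i)$. Let $\Delta:\mathcal{X}\times\mathcal{X}\to\mathbb{R}_+$ be a distortion measure, extended to fragments by $\Delta(\tilde{\boldsymbol{x}},\bar{\boldsymbol{x}})=\frac1L\sum_{j\in[L]}\Delta(\tilde x_j,\bar x_j)$; for $\delta>0$ let $\Xi_\delta=\frac1M\sum_{i\in[M]}\mathbb{1}\{\Delta(\boldsymbol{X}(i),\hat{\boldsymbol{X}}(i))\geq\delta\}$ and $\mathsf{FP}(\delta,\xi)=\mathbb{P}[\Xi_\delta\geq\xi]$. Define $$d^*_{P_{Y|X}}(\delta)=\min_{Q_{X_1X_2}\in\mathcal{P}(\mathcal{X}^2):\ \Delta(Q_{X_1X_2})\geq\delta} d_{P_{Y|X}}(Q_{X_1X_2}).$$ Assume $\beta<1/H(P_X)$. If $\xi>H(P_X)/d^*_{P_{Y|X}}(\delta)$,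 then $\mathsf{FP}(\delta,\xi)=o(1)$ as $M\to\infty$.
   Context: $d_{P_{Y|X}}(x_1,x_2)=-\log\sum_{y}\sqrt{P_{Y|X}(y|x_1)P_{Y|X}(y|x_2)}$; for a joint PMF $Q_{X_1X_2}$ on $\mathcal{X}^2$, $d_{P_{Y|X}}(Q_{X_1X_2})=\sum_{x_1,x_2}Q_{X_1X_2}(x_1,x_2)d_{P_{Y|X}}(x_1,x_2)$ and $\Delta(Q_{X_1X_2})=\sum_{x_1,x_2}Q_{X_1X_2}(x_1,x_2)\Delta(x_1,x_2)$. $H(P_X)$ is the Shannon entropy (natural logarithms); $\mathcal{P}(\mathcal{X}^2)$ is the probability simplex on $\mathcal{X}^2$. *)

From HB Require Import structures.
From mathcomp Require Import all_boot all_order all_algebra all_fingroup.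
From mathcomp Require Import all_classical all_reals all_analysis.
Set Implicit Arguments. Unset Strict Implicit. Unset Printing Implicit Defensive.
Import Order.TTheory GRing.Theory Num.Theory.
Local Open Scope ring_scope.

Section Defs.
Context {R : realType} {X Y : finType}.

Definition PX (P : X -> Y -> R) (x : X) : R := \sum_(y : Y) P x y.
Definition PYgX (P : X -> Y -> R) (x : X) (y : Y) : R := P x y / PX P x.
(* Shannon entropy of P_X in nats (ln 0 = 0, so 0 ln 0 = 0) *)
Definition entropyX (P : X -> Y -> R) : R := - \sum_(x : X) PX P x * ln (PX P x).

(* Bhattacharyya coefficient and d_{P_{Y|X}}(x1,x2) = -log BC, +oo when BC = 0 *)
Definition bhat (P : X -> Y -> R) (x1 x2 : X) : R :=
  \sum_(y : Y) Num.sqrt (PYgX P x1 y * PYgX P x2 y).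
Definition dB (P : X -> Y -> R) (x1 x2 : X) : \bar R :=
  if bhat P x1 x2 == 0 then +oo%E else (- ln (bhat P x1 x2))%:E.

Definition is_pmf2 (Q : X * X -> R) : Prop :=
  (forall z, 0 <= Q z) /\ \sum_(z : X * X) Q z = 1.
Definition dQ (P : X -> Y -> R) (Q : X * X -> R) : \bar R :=
  (\sum_(z : X * X) (Q z)%:E * dB P z.1 z.2)%E.
Definition DeltaQ (D : X -> X -> R) (Q : X * X -> R) : R :=
  \sum_(z : X * X) Q z * D z.1 z.2.
(* d^*(delta) = min over Q in P(X^2) with Delta(Q) >= delta of d(Q)
   (infimum in \bar R; +oo if the constraint set is empty) *)
Definition dstar (P : X -> Y -> R) (D : X -> X -> R) (delta : R) : \bar R :=
  ereal_inf [set dQ P Q | Q in [set Q | is_pmf2 Q /\ delta <= DeltaQ D Q]].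

Definition Lfrag (beta : R) (M : nat) : nat := `|Num.ceil (beta * ln (M%:R : R))|%N.

(* An outcome (X^N, Y^N), N = M L, indexed by (fragment i, position k):
   entry (i,k) is the ((i-1)L+k)-th symbol pair. *)
Definition prob {M L : nat} (P : X -> Y -> R) (w : {ffun 'I_M * 'I_L -> X * Y}) : R :=
  \prod_(z : 'I_M * 'I_L) P (w z).1 (w z).2.
(* P[Y^N | tilde X^N] where tilde X(i) = X(pi i) *)
Definition lik {M L : nat} (P : X -> Y -> R) (w : {ffun 'I_M * 'I_L -> X * Y})
  (pi : {perm 'I_M}) : R :=
  \prod_(z : 'I_M * 'I_L) PYgX P (w (pi z.1, z.2)).1 (w z).2.
(* Delta(X(i), hat X(i)) with hat X(i) = X(pi i) *)
Definition fragDist {M L : nat} (D : X -> X -> R) (w : {ffun 'I_M * 'I_L -> X * Y})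
  (pi : {perm 'I_M}) (i : 'I_M) : R :=
  (L%:R)^-1 * \sum_(k < L) D (w (i, k)).1 (w (pi i, k)).1.
Definition Xi {M L : nat} (D : X -> X -> R) (delta : R)
  (w : {ffun 'I_M * 'I_L -> X * Y}) (pi : {perm 'I_M}) : R :=
  (M%:R)^-1 * (#|[set i : 'I_M | delta <= fragDist D w pi i]|)%:R.
Definition FP {M L : nat} (P : X -> Y -> R) (D : X -> X -> R) (delta xi : R)
  (dec : {ffun 'I_M * 'I_L -> X * Y} -> {perm 'I_M}) : R :=
  \sum_(w : {ffun 'I_M * 'I_L -> X * Y}) (if xi <= Xi D delta w (dec w) then prob P w else 0).

End Defs.

(* When the
   maximum-likelihood decoder errs on (x, y) it outputs a permutation x' of the
   fragments of x with P(y | x') >= P(y | x), so P(x, y) <= P(x) sqrt (P(y | x') P(y | x)).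
   Summing over y turns the square root into a product of Bhattacharyya
   coefficients, which is at most exp (- N xi d) for any d <= d*(delta): at least
   xi M fragment pairs have distortion >= delta, and the joint type of each such
   pair is feasible for d*(delta).  All candidates x' have probability P(x), so
   there are at most 1 / P(x) of them, and the error mass carried by x is at most
   min (P(x), exp (- N xi d)) <= P(x)^(1 - s) exp (- s N xi d).  Summing over x
   gives FP <= (sum_a P_X(a)^(1 - s) exp (- s xi d))^N, whose base is < 1 for
   small s > 0 because the logarithmic derivative at s = 0 of the Renyi sum
   sum_a P_X(a)^(1 - s) is H(P_X) < xi d. *)

From HB Require Import structures.
From mathcomp Require Import all_boot all_order all_algebra all_fingroup.
From mathcomp Require Import all_classical all_reals all_analysis.
From mathcomp Require Import ring lra.
Set Implicit Arguments. Unset Strict Implicit. Unset Printing Implicit Defensive.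
Import Order.TTheory GRing.Theory Num.Theory.
Local Open Scope ring_scope.

Section RealFacts.
Variable R : realType.

Lemma sqrtrM_le_avg (a b : R) : 0 <= a -> 0 <= b -> Num.sqrt (a * b) <= (a + b) / 2.
Proof.
move=> a0 b0; rewrite -(ger0_norm (_ : 0 <= (a + b) / 2)); last by lra.
by rewrite -sqrtr_sqr ler_wsqrtr // (leif_AGM2 a b).
Qed.

Lemma sqrtr_prod (I : finType) (F : I -> R) : (forall i, 0 <= F i) ->
  Num.sqrt (\prod_i F i) = \prod_i Num.sqrt (F i).
Proof.
move=> F0.
suff [] : 0 <= \prod_i F i /\ Num.sqrt (\prod_i F i) = \prod_i Num.sqrt (F i) by [].
elim/big_rec2: _ => [|i a b _ [a0 <-]]; first by rewrite sqrtr1.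
by split; [apply: mulr_ge0 | rewrite sqrtrM].
Qed.

Lemma ln_prod (I : finType) (F : I -> R) : (forall i, 0 < F i) ->
  ln (\prod_i F i) = \sum_i ln (F i).
Proof.
move=> F0.
suff [] : 0 < \prod_i F i /\ ln (\prod_i F i) = \sum_i ln (F i) by [].
elim/big_rec2: _ => [|i a b _ [a0 <-]]; first by rewrite ln1.
by split; [apply: mulr_gt0 | rewrite lnM ?posrE].
Qed.

Lemma le_expR_interpolate (v a b s : R) : 0 <= v -> v <= a -> v <= b ->
  0 < a -> 0 < b -> 0 <= s <= 1 -> v <= expR ((1 - s) * ln a + s * ln b).
Proof.
move=> v0 va vb a0 b0 /andP[s0 s1].
have [->|v_neq0] := eqVneq v 0; first exact/ltW/expR_gt0.
have v_gt0 : 0 < v by rewrite lt_neqAle eq_sym v_neq0.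
rewrite -[v in v <= _]lnK ?posrE // ler_expR.
have : ln v <= ln a by rewrite ler_ln ?posrE.
have : ln v <= ln b by rewrite ler_ln ?posrE.
nra.
Qed.

Lemma expR_le1Ddiv (t tau : R) : 0 <= t -> t <= tau -> tau < 1 ->
  expR t <= 1 + t / (1 - tau).
Proof.
move=> t0 t_le tau1; have tau_gt0 : 0 < 1 - tau by lra.
have t_gt0 : 0 < 1 - t by lra.
have expR_le_inv : expR t <= (1 - t)^-1.
  rewrite -(ler_pM2r t_gt0) mulVf ?gt_eqF //.
  have := ler_wpM2l (ltW (expR_gt0 t)) (expR_ge1Dx (- t)).
  by rewrite expRxMexpNx_1 mulrC; lra.
apply: le_trans expR_le_inv _; rewrite -(ler_pM2r t_gt0) mulVf ?gt_eqF //.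
have : t * (1 - tau) <= t * (1 - t) by apply: ler_wpM2l; lra.
by rewrite -ler_pdivlMr // mulrAC; nra.
Qed.

End RealFacts.

Section Renyi.
Variables (R : realType) (T : finType) (p : T -> R).
Hypothesis p_gt0 : forall a, 0 < p a.
Hypothesis p_sum1 : \sum_a p a = 1.

Lemma pmf_le1 a : p a <= 1.
Proof. by rewrite -p_sum1 (bigD1 a) //= lerDl sumr_ge0 // => b _; exact: ltW. Qed.

Lemma oppr_ln_pmf_ge0 a : 0 <= - ln (p a).
Proof. by rewrite oppr_ge0 ln_le0 // pmf_le1. Qed.

Lemma entropy_pmf_ge0 : 0 <= - \sum_a p a * ln (p a).
Proof.
rewrite -sumrN; apply: sumr_ge0 => a _.
by rewrite -mulrN mulr_ge0 ?oppr_ln_pmf_ge0 // ltW.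
Qed.

Lemma exists_renyi_sum_lt c : - \sum_a p a * ln (p a) < c ->
  exists2 s, 0 <= s <= 1 & \sum_a expR ((1 - s) * ln (p a)) < expR (s * c).
Proof.
set H := - \sum_a _; move=> Hc.
have H_ge0 : 0 <= H := entropy_pmf_ge0.
have c_gt0 : 0 < c := le_lt_trans H_ge0 Hc.
set K := \sum_a - ln (p a).
have K_ge0 : 0 <= K by apply: sumr_ge0 => a _; exact: oppr_ln_pmf_ge0.
have le_K a : - ln (p a) <= K.
  by rewrite /K (bigD1 a) //= lerDl; apply: sumr_ge0 => b _; exact: oppr_ln_pmf_ge0.
pose tau := (c - H) / (2 * c); pose s := tau / (K + 1).
have tau_gt0 : 0 < tau by rewrite divr_gt0 ?subr_gt0 ?mulr_gt0.
have tau_le : tau <= 1 / 2.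
  by rewrite ler_pdivrMr ?mulr_gt0 //; lra.
have s_gt0 : 0 < s by rewrite divr_gt0 // ltr_pwDr.
have sK_le : s * K <= tau.
  by rewrite mulrAC ler_pdivrMr ?ltr_pwDr // ler_wpM2l ?(ltW tau_gt0) ?lerDl.
have s_le1 : s <= 1.
  by rewrite ler_pdivrMr ?ltr_pwDr // mul1r; apply: le_trans tau_le _; lra.
exists s; first by rewrite (ltW s_gt0) s_le1.
have u_gt0 : 0 < 1 - tau by lra.
have term a : expR ((1 - s) * ln (p a)) <= p a * (1 + s * - ln (p a) / (1 - tau)).
  have t_ge0 : 0 <= s * - ln (p a) by rewrite mulr_ge0 ?oppr_ln_pmf_ge0 // ltW.
  have t_le : s * - ln (p a) <= tau.
    by apply: le_trans sK_le; rewrite ler_wpM2l // ltW.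
  have -> : (1 - s) * ln (p a) = ln (p a) + s * - ln (p a) by ring.
  rewrite expRD lnK ?posrE // ler_pM2l //.
  by apply: expR_le1Ddiv => //; lra.
apply: le_lt_trans (ler_sum _ (fun a _ => term a)) _.
have -> : \sum_a p a * (1 + s * - ln (p a) / (1 - tau)) = 1 + s * (H / (1 - tau)).
  under eq_bigr do rewrite mulrDr mulr1.
  rewrite big_split /= p_sum1 /H -sumrN mulr_suml mulr_sumr; congr (_ + _).
  by apply: eq_bigr => a _; ring.
apply: lt_le_trans (expR_ge1Dx _); rewrite ltrD2l ltr_pM2l // ltr_pdivrMr //.
have : c * tau = (c - H) / 2 by rewrite /tau; field; rewrite gt_eqF.
lra.
Qed.

End Renyi.

Section Channel.
Variables (R : realType) (X Y : finType) (P : X -> Y -> R).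
Hypothesis P_ge0 : forall x y, 0 <= P x y.
Hypothesis PX_gt0 : forall x, 0 < PX P x.

Lemma PYgX_ge0 x y : 0 <= PYgX P x y.
Proof. by rewrite /PYgX divr_ge0 // ltW. Qed.

Lemma sum_PYgX x : \sum_y PYgX P x y = 1.
Proof. by rewrite -mulr_suml -/(PX P x) divff // gt_eqF. Qed.

Lemma bhat_ge0 x1 x2 : 0 <= bhat P x1 x2.
Proof. by apply: sumr_ge0 => y _; exact: sqrtr_ge0. Qed.

Lemma bhat_le1 x1 x2 : bhat P x1 x2 <= 1.
Proof.
apply: le_trans (_ : _ <= \sum_y (PYgX P x1 y + PYgX P x2 y) / 2) _.
  by apply: ler_sum => y _; apply: sqrtrM_le_avg; exact: PYgX_ge0.
by rewrite -mulr_suml big_split /= !sum_PYgX; lra.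
Qed.

Lemma bhatC x1 x2 : bhat P x1 x2 = bhat P x2 x1.
Proof. by apply: eq_bigr => y _; rewrite mulrC. Qed.

Lemma dB_ge0 x1 x2 : (0 <= dB P x1 x2)%E.
Proof.
rewrite /dB; case: ifP => _; first exact: leey.
by rewrite lee_fin oppr_ge0 ln_le0 // bhat_le1.
Qed.

Lemma dstar_ge0 (D : X -> X -> R) delta : (0 <= dstar P D delta)%E.
Proof.
apply: le_ereal_inf_tmp => _ [Q [[Q_ge0 _] _] <-].
by apply: sume_ge0 => z _; rewrite mule_ge0 ?lee_fin ?dB_ge0.
Qed.

End Channel.

Section JointType.
Variables (R : realType) (X : finType) (L : nat) (a b : 'I_L -> X).

Definition joint_type (z : X * X) : R := L%:R^-1 * \sum_k ((a k, b k) == z)%:R.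

Lemma sum_joint_type (f : X * X -> R) :
  \sum_z joint_type z * f z = L%:R^-1 * \sum_k f (a k, b k).
Proof.
under eq_bigr do rewrite -mulrA mulr_suml.
rewrite -mulr_sumr exchange_big /=; congr (_ * _); apply: eq_bigr => k _.
under eq_bigr do rewrite mulr_natl mulrb.
by rewrite -big_mkcond /= (big_pred1 (a k, b k)) // => z; rewrite eq_sym.
Qed.

Hypothesis L_gt0 : (0 < L)%N.

Lemma joint_type_pmf : is_pmf2 joint_type.
Proof.
split=> [z|].
  by rewrite mulr_ge0 ?invr_ge0 ?ler0n ?sumr_ge0 // => k _; rewrite ler0n.
have := sum_joint_type (fun=> 1); under eq_bigr do rewrite mulr1.
by move=> ->; rewrite sumr_const card_ord mulVf // pnatr_eq0 -lt0n.
Qed.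

End JointType.

Arguments joint_type {R X L} a b z.

Section Fragment.
Variables (R : realType) (X Y : finType) (P : X -> Y -> R) (D : X -> X -> R).
Variables (L : nat) (a b : 'I_L -> X).
Hypothesis L_gt0 : (0 < L)%N.

Lemma dQ_joint_type : (forall k, 0 < bhat P (a k) (b k)) ->
  dQ P (joint_type a b) = (L%:R^-1 * \sum_k - ln (bhat P (a k) (b k)))%:E.
Proof.
move=> bhat_gt0.
rewrite -(sum_joint_type a b (fun z => - ln (bhat P z.1 z.2))) -sumEFin.
apply: eq_bigr => z _; rewrite /dB; case: ifP => [/eqP bhat0|_]; last by rewrite EFinM.
suff -> : joint_type a b z = 0 :> R by rewrite mul0e mul0r.
rewrite /joint_type big1 ?mulr0 // => k _; case: eqP => // akbk.
by move: bhat0 (bhat_gt0 k); rewrite -akbk => ->; rewrite ltxx.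
Qed.

Lemma prod_bhat_le_expR delta d :
  delta <= L%:R^-1 * \sum_k D (a k) (b k) -> (d%:E <= dstar P D delta)%E ->
  \prod_k bhat P (a k) (b k) <= expR (- (L%:R * d)).
Proof.
move=> frag_far d_le.
have [[k bhat0]|bhat_neq0] := pselect (exists k, bhat P (a k) (b k) = 0).
  by rewrite (bigD1 k) //= bhat0 mul0r ltW ?expR_gt0.
have bhat_gt0 k : 0 < bhat P (a k) (b k).
  by rewrite lt_neqAle bhat_ge0 // andbT eq_sym; apply/eqP => ?; apply: bhat_neq0; exists k.
have : (dstar P D delta <= dQ P (joint_type a b))%E.
  apply: ereal_inf_lbound; exists (joint_type a b) => //; split.
    exact: joint_type_pmf.
  by rewrite /DeltaQ (sum_joint_type a b (fun z => D z.1 z.2)).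
rewrite dQ_joint_type // => /(le_trans d_le); rewrite lee_fin.
move=> /(ler_wpM2l (ler0n _ L)); rewrite mulrA mulfV ?pnatr_eq0 -?lt0n // mul1r sumrN => Ld_le.
have prod_gt0 : 0 < \prod_k bhat P (a k) (b k) by apply: prodr_gt0.
by rewrite -[X in X <= _]lnK ?posrE // ler_expR ln_prod //; lra.
Qed.

End Fragment.

Section Sequences.
Variables (R : realType) (X Y : finType) (P : X -> Y -> R) (I : finType).
Hypothesis P_ge0 : forall x y, 0 <= P x y.
Hypothesis P_sum1 : \sum_x \sum_y P x y = 1.
Hypothesis PX_gt0 : forall x, 0 < PX P x.

Definition pairf (x : {ffun I -> X}) (y : {ffun I -> Y}) : {ffun I -> X * Y} :=
  [ffun j => (x j, y j)].
Definition PXn (x : {ffun I -> X}) : R := \prod_j PX P (x j).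
Definition PYgXn (x : {ffun I -> X}) (y : {ffun I -> Y}) : R :=
  \prod_j PYgX P (x j) (y j).

Lemma sum_pairf (F : {ffun I -> X * Y} -> R) :
  \sum_w F w = \sum_x \sum_y F (pairf x y).
Proof.
rewrite pair_big /=; apply: (reindex (fun xy => pairf xy.1 xy.2)).
exists (fun w : {ffun I -> X * Y} =>
  ([ffun j => (w j).1] : {ffun I -> X}, [ffun j => (w j).2] : {ffun I -> Y})) => [[x y] _|w _].
  by congr (_, _); apply/ffunP => j; rewrite !ffunE.
by apply/ffunP => j; rewrite !ffunE -surjective_pairing.
Qed.

Lemma PXn_gt0 x : 0 < PXn x.
Proof. exact: prodr_gt0. Qed.

Lemma PYgXn_ge0 x y : 0 <= PYgXn x y.
Proof. by apply: prodr_ge0 => j _; exact: PYgX_ge0. Qed.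

Lemma prod_P_pairf x y :
  \prod_j P (pairf x y j).1 (pairf x y j).2 = PXn x * PYgXn x y.
Proof.
rewrite -big_split /=; apply: eq_bigr => j _.
by rewrite ffunE /PYgX mulrC divfK // gt_eqF.
Qed.

Lemma sum_PXn : \sum_x PXn x = 1.
Proof.
by rewrite -(bigA_distr_bigA (fun _ a => PX P a)) big1.
Qed.

Lemma sum_PXn_le1 (S : {pred {ffun I -> X}}) : \sum_(x in S) PXn x <= 1.
Proof.
rewrite -sum_PXn [leRHS](bigID (mem S)) /= lerDl.
by apply: sumr_ge0 => x _; exact/ltW/PXn_gt0.
Qed.

Lemma sum_PYgXn x : \sum_y PYgXn x y = 1.
Proof.
rewrite -(bigA_distr_bigA (fun j b => PYgX P (x j) b)) big1 // => j _.
exact: sum_PYgX.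
Qed.

Lemma PXn_reindex (h : I -> I) (x : {ffun I -> X}) :
  bijective h -> PXn [ffun j => x (h j)] = PXn x.
Proof.
move=> h_bij; rewrite /PXn [RHS](reindex h); last exact: onW_bij.
by apply: eq_bigr => j _; rewrite ffunE.
Qed.

Lemma sum_sqrt_PYgXn x' x :
  \sum_y Num.sqrt (PYgXn x' y * PYgXn x y) = \prod_j bhat P (x' j) (x j).
Proof.
rewrite bigA_distr_bigA /=; apply: eq_bigr => y _.
rewrite -big_split /= sqrtr_prod // => j.
by rewrite mulr_ge0 ?PYgX_ge0.
Qed.

Lemma sum_expR_ln_PXn t :
  \sum_x expR (t * ln (PXn x)) = (\sum_a expR (t * ln (PX P a))) ^+ #|I|.
Proof.
under eq_bigr do rewrite ln_prod // mulr_sumr expR_sum.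
by rewrite -(bigA_distr_bigA (fun _ a => expR (t * ln (PX P a)))) prodr_const.
Qed.

End Sequences.

Section MLDecoding.
Variables (R : realType) (X Y : finType) (P : X -> Y -> R) (D : X -> X -> R).
Hypothesis P_ge0 : forall x y, 0 <= P x y.
Hypothesis P_sum1 : \sum_x \sum_y P x y = 1.
Hypothesis PX_gt0 : forall x, 0 < PX P x.
Variables (M L : nat) (delta xi : R).
Local Notation I := ('I_M * 'I_L)%type.

Definition permf (x : {ffun I -> X}) (pi : {perm 'I_M}) : {ffun I -> X} :=
  [ffun j => x (pi j.1, j.2)].

Definition XiX (x : {ffun I -> X}) (pi : {perm 'I_M}) : R :=
  M%:R^-1 * #|[set i | delta <= L%:R^-1 * \sum_k D (x (i, k)) (x (pi i, k))]|%:R.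

Lemma Xi_pairf (x : {ffun I -> X}) (y : {ffun I -> Y}) pi :
  Xi D delta (pairf x y) pi = XiX x pi.
Proof.
congr (_ * _%:R); apply: eq_card => i; rewrite !inE /fragDist.
by under eq_bigr do rewrite !ffunE.
Qed.

Lemma lik_pairf (x : {ffun I -> X}) (y : {ffun I -> Y}) pi :
  lik P (pairf x y) pi = PYgXn P (permf x pi) y.
Proof. by apply: eq_bigr => j _; rewrite !ffunE. Qed.

Lemma permf1 x : permf x 1 = x.
Proof. by apply/ffunP => -[i k]; rewrite ffunE perm1. Qed.

Lemma PXn_permf x pi : PXn P (permf x pi) = PXn P x.
Proof.
apply: PXn_reindex; exists (fun j : I => ((pi^-1)%g j.1, j.2)) => -[i k] /=.
  by rewrite permK.
by rewrite permKV.
Qed.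

Variable d : R.
Hypothesis M_gt0 : (0 < M)%N.
Hypothesis L_gt0 : (0 < L)%N.
Hypothesis d_ge0 : 0 <= d.
Hypothesis d_le_dstar : (d%:E <= dstar P D delta)%E.

Lemma prod_bhat_permf_le x pi : xi <= XiX x pi ->
  \prod_j bhat P (permf x pi j) (x j) <= expR (- ((M * L)%:R * (xi * d))).
Proof.
rewrite /XiX; set S := [set _ | _]; move=> xi_le.
have -> : \prod_j bhat P (permf x pi j) (x j) =
    \prod_i \prod_k bhat P (x (i, k)) (x (pi i, k)).
  by rewrite pair_big; apply: eq_bigr => -[i k] _; rewrite ffunE bhatC.
apply: le_trans (_ : _ <= \prod_i (if i \in S then expR (- (L%:R * d)) else 1)) _.
  apply: ler_prod => i _; apply/andP; split.
    by apply: prodr_ge0 => k _; exact: bhat_ge0.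
  case: ifP => [|_].
    rewrite inE => far.
    exact: (prod_bhat_le_expR (a := fun k => x (i, k)) (b := fun k => x (pi i, k))
                              L_gt0 far).
  by apply: prodr_ile1 => k _; rewrite bhat_ge0 (bhat_le1 P_ge0 PX_gt0).
rewrite -big_mkcond prodr_const -expRM_natl ler_expR natrM.
have : M%:R * xi <= #|S|%:R by rewrite -ler_pdivlMl ?ltr0n.
have : 0 <= L%:R * d by rewrite mulr_ge0.
nra.
Qed.

Variable dec : {ffun I -> X * Y} -> {perm 'I_M}.
Hypothesis dec_ML : forall w pi, lik P w pi <= lik P w (dec w).

Definition ml_errors (x : {ffun I -> X}) : {set {ffun I -> X}} :=
  [set permf x pi | pi in [set pi | xi <= XiX x pi]].

Definition err_mass (x : {ffun I -> X}) : R :=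
  \sum_y (if xi <= Xi D delta (pairf x y) (dec (pairf x y)) then prob P (pairf x y) else 0).

Lemma FP_err_mass : FP P D delta xi dec = \sum_x err_mass x.
Proof. exact: sum_pairf. Qed.

Lemma err_mass_ge0 x : 0 <= err_mass x.
Proof. by apply: sumr_ge0 => y _; case: ifP => // _; apply: prodr_ge0. Qed.

Lemma err_mass_le_PXn x : err_mass x <= PXn P x.
Proof.
apply: le_trans (_ : _ <= \sum_y prob P (pairf x y)) _.
  by apply: ler_sum => y _; case: ifP => // _; apply: prodr_ge0.
under eq_bigr do rewrite /prob (prod_P_pairf PX_gt0).
by rewrite -mulr_sumr sum_PYgXn // mulr1.
Qed.

Lemma err_prob_le_sqrt x y :
  (if xi <= Xi D delta (pairf x y) (dec (pairf x y)) then prob P (pairf x y) else 0)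
  <= \sum_(x' in ml_errors x) PXn P x * Num.sqrt (PYgXn P x' y * PYgXn P x y).
Proof.
have term_ge0 x' : 0 <= PXn P x * Num.sqrt (PYgXn P x' y * PYgXn P x y).
  by rewrite mulr_ge0 ?sqrtr_ge0 // ltW ?PXn_gt0.
case: ifP => [err|_]; last exact: sumr_ge0.
set pi := dec (pairf x y); rewrite Xi_pairf in err.
have err_in : permf x pi \in ml_errors x by apply: imset_f; rewrite inE.
rewrite (bigD1 _ err_in) /= -[X in X <= _]addr0 lerD ?sumr_ge0 //.
rewrite /prob (prod_P_pairf PX_gt0) ler_pM2l ?PXn_gt0 //.
have ML := dec_ML (pairf x y) 1; rewrite !lik_pairf permf1 -/pi in ML.
apply: le_trans (_ : Num.sqrt (PYgXn P x y * PYgXn P x y) <= _).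
  by rewrite -expr2 sqrtr_sqr ger0_norm ?PYgXn_ge0.
by apply: ler_wsqrtr; apply: ler_wpM2r; rewrite ?PYgXn_ge0.
Qed.

Lemma err_mass_le_expR x : err_mass x <= expR (- ((M * L)%:R * (xi * d))).
Proof.
set E := expR _.
apply: le_trans (ler_sum _ (fun y _ => err_prob_le_sqrt x y)) _.
rewrite exchange_big /=; under eq_bigr do rewrite -mulr_sumr sum_sqrt_PYgXn //.
apply: le_trans (_ : \sum_(x' in ml_errors x) PXn P x' * E <= _).
  apply: ler_sum => _ /imsetP[pi /[!inE] xi_le ->].
  rewrite PXn_permf; apply: ler_wpM2l; first exact/ltW/PXn_gt0.
  exact: prod_bhat_permf_le.
by rewrite -mulr_suml ler_piMl ?sum_PXn_le1 // ltW ?expR_gt0.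
Qed.

Lemma FP_le_pow s : 0 <= s <= 1 ->
  FP P D delta xi dec <=
  ((\sum_a expR ((1 - s) * ln (PX P a))) * expR (- (s * (xi * d)))) ^+ (M * L).
Proof.
move=> s01; rewrite FP_err_mass.
pose E := expR (- ((M * L)%:R * (xi * d))).
apply: le_trans (_ : _ <= \sum_x expR ((1 - s) * ln (PXn P x) + s * ln E)) _.
  apply: ler_sum => x _; apply: le_expR_interpolate => //.
  - exact: err_mass_ge0.
  - exact: err_mass_le_PXn.
  - exact: err_mass_le_expR.
  - exact: PXn_gt0.
  - exact: expR_gt0.
under eq_bigr do rewrite expRD.
rewrite -mulr_suml sum_expR_ln_PXn // card_prod !card_ord exprMn expRK.
have -> : s * - ((M * L)%:R * (xi * d)) = (M * L)%:R * - (s * (xi * d)) by ring.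
by rewrite expRM_natl.
Qed.

End MLDecoding.

Local Open Scope classical_set_scope.

Lemma cvg_le_geometric (R : realType) (u : nat -> R) (r : R) : 0 <= r < 1 ->
  (\forall n \near \oo, 0 <= u n <= r ^+ n) -> u n @[n --> \oo] --> 0.
Proof.
move=> /andP[r0 r1] ur.
apply: (@squeeze_cvgr _ _ _ _ (fun=> 0) (geometric 1 r)).
- by near=> n; rewrite /= mul1r; near: n.
- exact: (@cvg_cst _ 0 _ _ eventually_filter).
- by apply: cvg_geometric; rewrite ger0_norm.
Unshelve. all: by end_near.
Qed.

Lemma exists_fin_le_lt_mul (R : realType) (h xi : R) (e : \bar R) :
  0 <= h -> (0 <= e)%E -> (h%:E < xi%:E * e)%E ->
  exists d, [/\ 0 <= d, (d%:E <= e)%E & h < xi * d].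
Proof.
move=> h_ge0; case: e => [e| |] e_ge0 h_lt; last by rewrite leeNy_eq in e_ge0.
  by exists e; split; rewrite -?lee_fin // -lte_fin EFinM.
have xi_gt0 : 0 < xi.
  move: h_lt; rewrite mulry; have [xi_lt0|//|->] := ltrgtP xi 0.
    by rewrite ltr0_sg // mulN1e ltNge leNye.
  by rewrite sgr0 mul0e lte_fin ltNge h_ge0.
exists ((h + 1) / xi); split; rewrite ?leey ?divr_ge0 ?ltW //; first lra.
by rewrite mulrC divfK ?gt_eqF //; lra.
Qed.

Lemma Lfrag_gt0 (R : realType) (beta : R) M :
  0 < beta -> (1 < M)%N -> (0 < Lfrag beta M)%N.
Proof.
move=> beta_gt0 M_gt1; have lnM_gt0 : 0 < ln (M%:R : R) by rewrite ln_gt0 ?ltr1n.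
by rewrite absz_gt0 gt_eqF // ceil_gt0 mulr_gt0.
Qed.

Theorem theorem6 (R : realType) (X Y : finType) (P : X -> Y -> R) (D : X -> X -> R)
  (beta delta xi : R)
  (dec : forall M : nat, {ffun 'I_M * 'I_(Lfrag beta M) -> X * Y} -> {perm 'I_M}) :
  (forall x y, 0 <= P x y) ->
  \sum_(x : X) \sum_(y : Y) P x y = 1 ->
  (forall x, 0 < PX P x) ->
  (forall x1 x2, 0 <= D x1 x2) ->
  0 < beta -> 0 < delta ->
  (forall (M : nat) (w : {ffun 'I_M * 'I_(Lfrag beta M) -> X * Y}) (pi : {perm 'I_M}),
      lik P w pi <= lik P w (dec M w)) ->
  beta * entropyX P < 1 ->
  ((entropyX P)%:E < xi%:E * dstar P D delta)%E ->
  (fun M : nat => FP P D delta xi (dec M)) @ \oo --> 0.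
Proof.
move=> P_ge0 P_sum1 PX_gt0 _ beta_gt0 _ dec_ML _ Hxi.
have H_ge0 : 0 <= entropyX P := entropy_pmf_ge0 PX_gt0 P_sum1.
have [d [d_ge0 d_le Hd]] :=
  exists_fin_le_lt_mul H_ge0 (dstar_ge0 P_ge0 PX_gt0 D delta) Hxi.
have [s s01 Hs] := exists_renyi_sum_lt PX_gt0 P_sum1 Hd.
set G := \sum_a _ in Hs; set r := G * expR (- (s * (xi * d))).
have r_ge0 : 0 <= r by rewrite mulr_ge0 ?sumr_ge0 // => *; exact/ltW/expR_gt0.
have r_lt1 : r < 1 by rewrite /r -(expRxMexpNx_1 (s * (xi * d))) ltr_pM2r ?expR_gt0.
apply: (cvg_le_geometric (r := r)); first by rewrite r_ge0.
near=> M; have M_gt1 : (1 < M)%N by near: M; exists 2%N.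
have L_gt0 := Lfrag_gt0 beta_gt0 M_gt1.
rewrite sumr_ge0 => [|w _]; last by case: ifP => // _; apply: prodr_ge0.
have := FP_le_pow P_ge0 P_sum1 PX_gt0 xi (ltnW M_gt1) L_gt0 d_ge0 d_le (dec_ML M) s01.
move/le_trans; apply.
by rewrite ler_wiXn2l ?leq_pmulr // ltW.
Unshelve. all: by end_near.
Qed.
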